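(* Let $y_0\in\mathbb{R}$, $b>0$, $\epsilon>0$, and let $f:[y_0,\infty)\to\mathbb{R}$ be such that $p:=1/f$ is well defined and twice differentiable on $[y_0,\infty)$, with $f(y_0)>0$, $f'(y)>0$ and $p''(y)>0$ for all $y\ge y_0$. Assume $b<\int_{y_0}^{\infty}p(y)\,dy$ (possibly $+\infty$), so that the solution $y(x)$ of $y'=f(y)$, $y(0)=y_0$, exists on $[0,b]$; equivalently $y(x)$ is defined by $\int_{y_0}^{y(x)}p(y)\,dy=x$. For $h>0$ and integers $N\ge0$ let $\Sigma_{l,h,N}=\sum_{i=1}^{N}h\,p(y_0+hi)$. Let $0<x_1<x_2<\dots<x_N=b$ be a mesh. Let $n_2^{(1)}$ be the smallest positive integer $n$ with $\Sigma_{l,\epsilon,n}\ge b$ (assumed to exist), and let $j$ be a positive integer satisfying $$j\ge 1+\frac12\cdot\frac{p(y_0)-p(y_0+\epsilon n_2^{(1)}-\epsilon)}{p(y_0+\epsilon n_2^{(1)})}\qquad\text{or}\qquad j\ge\frac12\Big(1+\frac{p(y_0)}{p(y_0+\epsilon n_2^{(1)})}\Big).$$ Put $h^{(j)}=\epsilon/j$, and for each $k$ with $1\le k\le N$ let $n_{2,k}^{(j)}$ be the smallest positive integer $n$ with $\Sigma_{l,h^{(j)},n}\ge x_k$, and $y_{x_k}:=y_0+h^{(j)}n_{2,k}^{(j)}$. Then $$|y(x_k)-y_{x_k}|<\epsilon\quad\text{for all }k,\ 1\le k\le N.$$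
   Context: $\Sigma_{l,h,N}$ is the lower rectangular (right-endpoint) sum with step $h$ for $\int_{y_0}^{y_0+hN}p(y)\,dy$; the empty sum is $0$. *)

From Stdlib Require Import Reals.
From Coquelicot Require Import Coquelicot.
Open Scope R_scope.

Fixpoint Sigma_l (p : R -> R) (y0 h : R) (N : nat) : R :=
  match N with
  | O => 0
  | S n => Sigma_l p y0 h n + h * p (y0 + h * INR (S n))
  end.

Definition least_pos_index (p : R -> R) (y0 h c : R) (n : nat) : Prop :=
  (0 < n)%nat /\ c <= Sigma_l p y0 h n /\
  (forall m : nat, (0 < m)%nat -> (m < n)%nat -> Sigma_l p y0 h m < c).

(* p = 1/f is positive, nonincreasing and convex on [y0, oo).  Monotonicity
   gives Sigma_l h n <= int_{y0}^{y0+hn} p, which places y(x_k) at or below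
   the grid point y0 + h n_{2,k}.  Convexity gives the trapezoid bound
   int_{y0}^{y0+hn} p <= Sigma_l h n + h/2 (p y0 - p (y0+hn)), and comparing
   the step-h grid with the step-eps grid gives n_{2,k} <= j n_2^(1).  Together
   with the choice of j these bound the distance from y(x_k) to the grid point
   y0 + h (n_{2,k} - 1) by h (j - 1), so the total error is below h j = eps. *)

From Stdlib Require Import Reals Lra Lia.
From Coquelicot Require Import Coquelicot.
Open Scope R_scope.

Lemma continuity_pt_of_is_derive (F : R -> R) (y l : R) :
  is_derive F y l -> continuity_pt F y.
Proof.
  intros H. apply continuity_pt_filterlim.
  apply (ex_derive_continuous (K := R_AbsRing) (V := R_NormedModule)).
  exists l; exact H.
Qed.

Lemma nondecreasing_of_derive_nonneg (F dF : R -> R) (y0 : R) :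
  (forall y, y0 <= y -> is_derive F y (dF y)) ->
  (forall y, y0 <= y -> 0 <= dF y) ->
  forall a b, y0 <= a -> a <= b -> F a <= F b.
Proof.
  intros HD Hpos a b Ha Hab.
  destruct (MVT_gen F a b dF) as [c [Hc E]]; cbv zeta in *;
    rewrite ?Rmin_left, ?Rmax_right in * by lra.
  - intros z Hz. apply HD. lra.
  - intros z Hz. apply (continuity_pt_of_is_derive F z (dF z)), HD. lra.
  - assert (0 <= dF c) by (apply Hpos; lra). nra.
Qed.

Lemma pos_of_derive_pos (f : R -> R) (y0 : R) : 0 < f y0 ->
  (forall y, y0 <= y -> ex_derive f y /\ 0 < Derive f y) ->
  forall y, y0 <= y -> 0 < f y.
Proof.
  intros Hfy0 Hf' y Hy. enough (f y0 <= f y) by lra.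
  apply (nondecreasing_of_derive_nonneg f (Derive f) y0); try lra;
    intros z Hz; destruct (Hf' z Hz); [apply Derive_correct | left]; assumption.
Qed.

Lemma least_pos_index_le (p : R -> R) (y0 h c : R) (n m : nat) :
  least_pos_index p y0 h c n -> (0 < m)%nat -> c <= Sigma_l p y0 h m -> (n <= m)%nat.
Proof.
  intros [_ [_ Hmin]] Hm Hc.
  destruct (Nat.le_gt_cases n m) as [|Hlt]; [assumption|].
  specialize (Hmin m Hm Hlt). lra.
Qed.

Lemma least_pos_index_pred_lt (p : R -> R) (y0 h c : R) (n : nat) :
  0 < c -> least_pos_index p y0 h c (S n) -> Sigma_l p y0 h n < c.
Proof.
  intros Hc [_ [_ Hmin]]. destruct n as [|n]; [simpl; lra|].
  apply Hmin; lia.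
Qed.

Section ConvexDecreasing.

Variables (p p1 : R -> R) (y0 : R).
Hypothesis p_derive : forall y, y0 <= y -> is_derive p y (p1 y).
Hypothesis p1_nonpos : forall y, y0 <= y -> p1 y <= 0.
Hypothesis p1_nondecreasing : forall u v, y0 <= u -> u <= v -> p1 u <= p1 v.
Hypothesis p_pos : forall y, y0 <= y -> 0 < p y.

Lemma p_nonincreasing u v : y0 <= u -> u <= v -> p v <= p u.
Proof.
  intros Hu Huv.
  enough (- p u <= - p v) by lra.
  apply (nondecreasing_of_derive_nonneg (fun t => - p t) (fun t => - p1 t) y0); auto.
  - intros z Hz. apply (is_derive_opp p z (p1 z)), p_derive, Hz.
  - intros z Hz. specialize (p1_nonpos z Hz). lra.
Qed.

Lemma ex_RInt_p a b : y0 <= a -> y0 <= b -> ex_RInt p a b.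
Proof.
  intros Ha Hb. apply (ex_RInt_continuous (V := R_CompleteNormedModule)). intros z Hz.
  apply (ex_derive_continuous (K := R_AbsRing) (V := R_NormedModule)). exists (p1 z). apply p_derive.
  assert (y0 <= Rmin a b) by (apply Rmin_glb; lra). lra.
Qed.

Lemma RInt_p_Chasles a b c : y0 <= a -> y0 <= b -> y0 <= c ->
  RInt p a c = RInt p a b + RInt p b c.
Proof.
  intros Ha Hb Hc. symmetry.
  apply (RInt_Chasles p a b c); apply ex_RInt_p; assumption.
Qed.

Lemma p_below_chord a h t : y0 <= a -> 0 < h -> a <= t <= a + h ->
  p t <= p a + (t - a) * ((p (a + h) - p a) / h).
Proof.
  intros Ha Hh Ht.
  assert (Hcont : forall z, y0 <= z -> continuity_pt p z)
    by (intros z Hz; apply (continuity_pt_of_is_derive p z (p1 z)), p_derive, Hz).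
  destruct (MVT_gen p a t p1) as [c1 [Hc1 E1]]; cbv zeta in *;
    rewrite ?Rmin_left, ?Rmax_right in * by lra;
    [intros z Hz; apply p_derive; lra | intros z Hz; apply Hcont; lra |].
  destruct (MVT_gen p t (a + h) p1) as [c2 [Hc2 E2]]; cbv zeta in *;
    rewrite ?Rmin_left, ?Rmax_right in * by lra;
    [intros z Hz; apply p_derive; lra | intros z Hz; apply Hcont; lra |].
  assert (Hslope : p1 c1 <= p1 c2) by (apply p1_nondecreasing; lra).
  (* the chord exceeds p t by (t-a)(a+h-t)(p1 c2 - p1 c1)/h >= 0 *)
  replace (p (a + h) - p a) with (p1 c1 * (t - a) + p1 c2 * (a + h - t)) by lra.
  assert (0 <= (t - a) * (a + h - t) * (p1 c2 - p1 c1) / h).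
  { apply Rmult_le_pos; [apply Rmult_le_pos; nra | left; apply Rinv_0_lt_compat; lra]. }
  assert ((t - a) * ((p1 c1 * (t - a) + p1 c2 * (a + h - t)) / h) - p1 c1 * (t - a)
          = (t - a) * (a + h - t) * (p1 c2 - p1 c1) / h) by (field; lra).
  lra.
Qed.

Lemma RInt_p_ge_right_rectangle a b : y0 <= a -> a <= b ->
  (b - a) * p b <= RInt p a b.
Proof.
  intros Ha Hab.
  replace ((b - a) * p b) with (RInt (fun _ => p b) a b) by (rewrite RInt_const; reflexivity).
  apply RInt_le; [lra | apply ex_RInt_const | apply ex_RInt_p; lra |].
  intros z Hz. apply p_nonincreasing; lra.
Qed.

Lemma RInt_p_le_trapezoid a h : y0 <= a -> 0 < h ->
  RInt p a (a + h) <= h * (p a + p (a + h)) / 2.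
Proof.
  intros Ha Hh.
  set (K := (p (a + h) - p a) / h).
  set (G := fun t => p a * t + (t - a) ^ 2 / 2 * K).
  apply (is_RInt_le p (fun t => p a + (t - a) * K) a (a + h)); [lra | | |].
  - apply (RInt_correct (V := R_CompleteNormedModule)), ex_RInt_p; lra.
  - replace (h * (p a + p (a + h)) / 2) with (minus (G (a + h)) (G a))
      by (unfold minus, plus, opp, G, K; simpl; field; lra).
    apply (is_RInt_derive (V := R_CompleteNormedModule)).
    + intros z _. unfold G. auto_derive; [exact I | field].
    + intros z _. apply (ex_derive_continuous (K := R_AbsRing) (V := R_NormedModule)).
      auto_derive. exact I.
  - intros z Hz. apply p_below_chord; lra.
Qed.

Variable h : R.
Hypothesis h_pos : 0 < h.

Lemma grid_ge n : y0 <= y0 + h * INR n.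
Proof. pose proof (pos_INR n). nra. Qed.

Lemma grid_le m n : (m <= n)%nat -> y0 + h * INR m <= y0 + h * INR n.
Proof. intros Hmn. apply Rplus_le_compat_l, Rmult_le_compat_l; [lra | apply le_INR, Hmn]. Qed.

Lemma Sigma_l_le_RInt n : Sigma_l p y0 h n <= RInt p y0 (y0 + h * INR n).
Proof.
  induction n as [|n IH]; cbn [Sigma_l].
  - rewrite Rmult_0_r, Rplus_0_r, RInt_point. apply Rle_refl.
  - assert (Hgrid := grid_ge n).
    replace (y0 + h * INR (S n)) with (y0 + h * INR n + h) by (rewrite S_INR; ring).
    rewrite (RInt_p_Chasles y0 (y0 + h * INR n)) by lra.
    assert (Hrect := RInt_p_ge_right_rectangle (y0 + h * INR n) (y0 + h * INR n + h)
                   Hgrid ltac:(lra)).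
    replace (y0 + h * INR n + h - (y0 + h * INR n)) with h in Hrect by ring.
    lra.
Qed.

Lemma RInt_le_Sigma_l_trapezoid n :
  RInt p y0 (y0 + h * INR n) <= Sigma_l p y0 h n + h / 2 * (p y0 - p (y0 + h * INR n)).
Proof.
  induction n as [|n IH]; cbn [Sigma_l].
  - rewrite Rmult_0_r, Rplus_0_r, RInt_point. change zero with 0. lra.
  - assert (Hgrid := grid_ge n).
    replace (y0 + h * INR (S n)) with (y0 + h * INR n + h) by (rewrite S_INR; ring).
    rewrite (RInt_p_Chasles y0 (y0 + h * INR n)) by lra.
    assert (Htrap := RInt_p_le_trapezoid (y0 + h * INR n) h Hgrid h_pos).
    lra.
Qed.

Lemma Sigma_l_add_ge m d :
  Sigma_l p y0 h m + INR d * h * p (y0 + h * INR (m + d)) <= Sigma_l p y0 h (m + d).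
Proof.
  induction d as [|d IH].
  - rewrite Nat.add_0_r. simpl. lra.
  - rewrite Nat.add_succ_r. cbn [Sigma_l]. rewrite !S_INR.
    assert (Hgrid := grid_ge (m + d)).
    assert (p (y0 + h * (INR (m + d) + 1)) <= p (y0 + h * INR (m + d)))
      by (apply p_nonincreasing; lra).
    assert (0 <= INR d * h * (p (y0 + h * INR (m + d)) - p (y0 + h * (INR (m + d) + 1))))
      by (pose proof (pos_INR d); apply Rmult_le_pos; nra).
    nra.
Qed.

Lemma Sigma_l_refine (j m : nat) :
  Sigma_l p y0 (h * INR j) m <= Sigma_l p y0 h (j * m).
Proof.
  induction m as [|m IH].
  - rewrite Nat.mul_0_r. simpl. lra.
  - rewrite Nat.mul_succ_r. cbn [Sigma_l].
    assert (Hadd := Sigma_l_add_ge (j * m) j).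
    rewrite plus_INR, mult_INR in Hadd. rewrite S_INR.
    replace (h * (INR j * INR m + INR j)) with (h * INR j * (INR m + 1)) in Hadd by ring.
    lra.
Qed.

Lemma solution_le_grid (Y : R) n : y0 <= Y ->
  RInt p y0 Y <= Sigma_l p y0 h n -> Y <= y0 + h * INR n.
Proof.
  intros HY Hint.
  set (Z := y0 + h * INR n).
  destruct (Rle_or_lt Y Z) as [|HZY]; [assumption | exfalso].
  assert (Hgrid := grid_ge n). fold Z in Hgrid.
  rewrite (RInt_p_Chasles y0 Z Y) in Hint by lra.
  assert (Hlow := Sigma_l_le_RInt n).
  assert (Hrect := RInt_p_ge_right_rectangle Z Y Hgrid ltac:(lra)).
  assert (0 < (Y - Z) * p Y) by (apply Rmult_lt_0_compat; [lra | apply p_pos; lra]).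
  fold Z in Hlow. lra.
Qed.

(* The grid point [y0 + h n] lies less than [h (j - 1)] beyond [Y]: below
   the coarser point [y0 + h w] the trapezoid bound applies, beyond it the
   index constraint [n < w + j]. *)
Lemma grid_sub_solution_lt (Y : R) (n w j : nat) : y0 <= Y ->
  Sigma_l p y0 h n < RInt p y0 Y -> (n < w + j)%nat ->
  p y0 - p (y0 + h * INR w) <= 2 * (INR j - 1) * p (y0 + h * INR (w + j)) ->
  y0 + h * INR n - Y < h * (INR j - 1).
Proof.
  intros HY Hsum Hnj Hj.
  set (Z := y0 + h * INR n) in *.
  set (W := y0 + h * INR w) in *.
  set (E := y0 + h * INR (w + j)) in *.
  assert (HZ := grid_ge n). fold Z in HZ.
  assert (HW := grid_ge w). fold W in HW.
  assert (HZE : Z <= E) by (apply grid_le; lia).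
  assert (HWE : W <= E) by (apply grid_le; lia).
  assert (HpE : 0 < p E) by (apply p_pos; lra).
  assert (HpEZ : p E <= p Z) by (apply p_nonincreasing; lra).
  assert (HpWy0 : p W <= p y0) by (apply p_nonincreasing; lra).
  assert (Hj1 : 0 <= INR j - 1) by nra.
  assert (HZW : Z - W <= h * (INR j - 1)).
  { unfold Z, W. assert (INR n + 1 <= INR w + INR j)
      by (rewrite <- S_INR, <- plus_INR; apply le_INR; lia).
    nra. }
  set (v := Nat.min n w).
  set (V := y0 + h * INR v).
  destruct (Rle_or_lt Y V) as [HYV|HVY].
  - assert (Hadd := Sigma_l_add_ge v (n - v)).
    replace (v + (n - v))%nat with n in Hadd by lia. fold Z in Hadd.
    assert (HVZ : Z - V = INR (n - v) * h).
    { unfold Z, V. rewrite minus_INR by lia. ring. }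
    assert (Htrap := RInt_le_Sigma_l_trapezoid v). fold V in Htrap.
    rewrite (RInt_p_Chasles y0 Y V) in Htrap by lra.
    assert (Hrect := RInt_p_ge_right_rectangle Y V HY HYV).
    assert (HpVW : p W <= p V) by (apply p_nonincreasing; [apply grid_ge | apply grid_le; lia]).
    assert (HVZ' : V <= Z) by (apply grid_le; lia).
    assert ((Z - V) * p E <= (Z - V) * p Z) by (apply Rmult_le_compat_l; lra).
    assert ((V - Y) * p E <= (V - Y) * p V)
      by (apply Rmult_le_compat_l; [lra | apply p_nonincreasing; lra]).
    enough ((Z - Y) * p E < h * (INR j - 1) * p E) by (apply (Rmult_lt_reg_r (p E)); lra).
    nra.
  - destruct (Nat.min_spec n w) as [[_ Hv] | [_ Hv]]; fold v in Hv;
      unfold V in HVY; rewrite Hv in HVY; fold Z W in HVY; nra.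
Qed.

Lemma solution_near_grid (Y : R) (j m n : nat) :
  (0 < j)%nat -> y0 <= Y -> 0 < RInt p y0 Y ->
  RInt p y0 Y <= Sigma_l p y0 (h * INR j) (S m) ->
  least_pos_index p y0 h (RInt p y0 Y) n ->
  p y0 - p (y0 + h * INR (j * m)) <= 2 * (INR j - 1) * p (y0 + h * INR (j * S m)) ->
  Rabs (Y - (y0 + h * INR n)) < h * INR j.
Proof.
  intros Hj0 HY Hx Hcoarse Hn Hj.
  destruct n as [|n]; [destruct Hn; lia|].
  assert (Hnj : (S n <= j * S m)%nat).
  { apply (least_pos_index_le _ _ _ _ _ _ Hn); [nia|].
    assert (Href := Sigma_l_refine j (S m)). lra. }
  assert (Hupper : Y <= y0 + h * INR (S n)) by (apply solution_le_grid; [easy | apply Hn]).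
  assert (Hlower : y0 + h * INR n - Y < h * (INR j - 1)).
  { apply (grid_sub_solution_lt Y n (j * m) j HY).
    - exact (least_pos_index_pred_lt _ _ _ _ _ Hx Hn).
    - rewrite <- Nat.mul_succ_r. lia.
    - rewrite <- Nat.mul_succ_r. exact Hj. }
  rewrite S_INR in Hupper |- *. apply Rabs_def1; nra.
Qed.

End ConvexDecreasing.

Lemma mesh_le (x : nat -> R) (N : nat) :
  (forall k, (1 <= k)%nat -> (k < N)%nat -> x k < x (S k)) ->
  forall a b, (1 <= a)%nat -> (a <= b)%nat -> (b <= N)%nat -> x a <= x b.
Proof.
  intros Hinc a b Ha Hab HbN. induction Hab as [|b Hab IH]; [lra|].
  assert (x b < x (S b)) by (apply Hinc; lia).
  assert (x a <= x b) by (apply IH; lia). lra.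
Qed.

Lemma derive_inv_nonpos (f : R -> R) (y l : R) :
  0 < f y -> ex_derive f y -> 0 < Derive f y ->
  is_derive (fun t => / f t) y l -> l <= 0.
Proof.
  intros Hfy Hex Hdf Hl.
  assert (Hinv := is_derive_inv f y _ (Derive_correct f y Hex) ltac:(lra)).
  apply is_derive_unique in Hl. apply is_derive_unique in Hinv.
  replace l with (- Derive f y / f y ^ 2) by (rewrite <- Hl, <- Hinv; reflexivity).
  assert (0 < / f y ^ 2) by (apply Rinv_0_lt_compat, pow_lt, Hfy).
  unfold Rdiv. nra.
Qed.

Lemma refinement_factor_bound (a w e r : R) : 0 < e -> e <= w ->
  r >= 1 + / 2 * ((a - w) / e) \/ r >= / 2 * (1 + a / e) ->
  a - w <= 2 * (r - 1) * e.
Proof.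
  intros He Hew [Hr | Hr].
  - assert (2 * e * (/ 2 * ((a - w) / e)) = a - w) by (field; lra).
    assert (0 <= 2 * e * (r - 1 - / 2 * ((a - w) / e))) by (apply Rmult_le_pos; lra).
    nra.
  - assert (2 * e * (/ 2 * (1 + a / e)) = e + a) by (field; lra).
    assert (0 <= 2 * e * (r - / 2 * (1 + a / e))) by (apply Rmult_le_pos; lra).
    nra.
Qed.

Theorem theorem3
  (y0 b eps : R) (f : R -> R) (ysol : R -> R) (N : nat) (x : nat -> R)
  (n21 j : nat)
  (Hb : 0 < b) (Heps : 0 < eps)
  (* p := 1/f well defined on [y0, oo) *)
  (Hfnz : forall y, y0 <= y -> f y <> 0)
  (* p twice differentiable on [y0, oo) with p'' > 0 *)
  (Hp2 : exists p1 p2 : R -> R, forall y, y0 <= y ->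
       is_derive (fun t => / f t) y (p1 y) /\ is_derive p1 y (p2 y) /\ 0 < p2 y)
  (Hfy0 : 0 < f y0)
  (Hf' : forall y, y0 <= y -> ex_derive f y /\ 0 < Derive f y)
  (* b < int_{y0}^{oo} p  (the improper integral may be +oo) *)
  (Hint : Rbar_lt (Finite b) (Lim (fun Y => RInt (fun t => / f t) y0 Y) p_infty))
  (* y(x) defined by int_{y0}^{y(x)} p = x on [0, b] *)
  (Hysol : forall t, 0 <= t <= b ->
       y0 <= ysol t /\ RInt (fun s => / f s) y0 (ysol t) = t)
  (* mesh 0 < x_1 < ... < x_N = b *)
  (HN : (1 <= N)%nat) (Hx1 : 0 < x 1%nat)
  (Hxinc : forall k, (1 <= k)%nat -> (k < N)%nat -> x k < x (S k))
  (HxN : x N = b)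
  (* n_2^(1) *)
  (Hn21 : least_pos_index (fun t => / f t) y0 eps b n21)
  (* j *)
  (Hj0 : (0 < j)%nat)
  (Hj : INR j >= 1 + / 2 * ((/ f y0 - / f (y0 + eps * INR n21 - eps))
                             / (/ f (y0 + eps * INR n21)))
        \/ INR j >= / 2 * (1 + (/ f y0) / (/ f (y0 + eps * INR n21)))) :
  forall (k n2k : nat), (1 <= k)%nat -> (k <= N)%nat ->
    least_pos_index (fun t => / f t) y0 (eps / INR j) (x k) n2k ->
    Rabs (ysol (x k) - (y0 + (eps / INR j) * INR n2k)) < eps.
Proof.
  intros k n2k Hk1 HkN Hn2k.
  destruct Hp2 as [p1 [p2 Hp]].
  set (p := fun t => / f t) in *.
  assert (Hfpos := pos_of_derive_pos f y0 Hfy0 Hf').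
  assert (Hp_derive : forall y, y0 <= y -> is_derive p y (p1 y)) by apply Hp.
  assert (Hp1_nonpos : forall y, y0 <= y -> p1 y <= 0).
  { intros y Hy. destruct (Hf' y Hy) as [Hex Hdf].
    exact (derive_inv_nonpos f y (p1 y) (Hfpos y Hy) Hex Hdf (Hp_derive y Hy)). }
  assert (Hp1_nondecr : forall u v, y0 <= u -> u <= v -> p1 u <= p1 v).
  { apply (nondecreasing_of_derive_nonneg p1 p2 y0); intros z Hz;
      destruct (Hp z Hz) as [_ [? ?]]; [assumption | lra]. }
  assert (Hp_pos : forall y, y0 <= y -> 0 < p y)
    by (intros y Hy; apply Rinv_0_lt_compat, Hfpos, Hy).
  assert (Hxk : 0 < x k <= b).
  { assert (x 1%nat <= x k) by (apply (mesh_le x N Hxinc); lia).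
    assert (x k <= x N) by (apply (mesh_le x N Hxinc); lia). lra. }
  destruct (Hysol (x k) ltac:(lra)) as [HY HYint].
  destruct n21 as [|m]; [destruct Hn21; lia|].
  set (h := eps / INR j) in *.
  assert (Hh : 0 < h) by (apply Rdiv_lt_0_compat; [lra | apply lt_0_INR; lia]).
  assert (Hhj : h * INR j = eps) by (unfold h; field; apply not_0_INR; lia).
  assert (Hcoarse : forall i, h * INR (j * i) = eps * INR i)
    by (intros i; rewrite mult_INR, <- Hhj; ring).
  assert (HW : y0 <= y0 + eps * INR (S m) - eps)
    by (rewrite S_INR; pose proof (pos_INR m); nra).
  set (Y := ysol (x k)) in *.
  rewrite <- Hhj. rewrite <- HYint in Hn2k.
  apply (solution_near_grid p p1 y0 Hp_derive Hp1_nonpos Hp1_nondecr Hp_pos h Hh _ j m n2k Hj0);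
    [easy | lra | rewrite Hhj; destruct Hn21 as [_ [? _]]; lra | exact Hn2k |].
  rewrite Hcoarse, Hcoarse.
  replace (y0 + eps * INR m) with (y0 + eps * INR (S m) - eps) by (rewrite S_INR; ring).
  apply refinement_factor_bound; [apply Hp_pos; lra | | exact Hj].
  apply (p_nonincreasing p p1 y0 Hp_derive Hp1_nonpos); lra.
Qed.
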